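(* Let $\mathcal F$ be a Banach function space that is compactly and densely embedded in $C(\mathbf X)$. There exists a strategy for Predictor (with $|\mu_n|\le1$) that guarantees, for all $N=1,2,\dots$, all $F\in C(\mathbf X)$ and all moves of Reality, $$\sum_{n=1}^N(y_n-\mu_n)^2\le\sum_{n=1}^N(y_n-F(x_n))^2+C\inf_{\epsilon\in(0,1/2]}\left(\mathcal H_{\epsilon/A(\epsilon)}(U_{\mathcal F})+\log\log\frac1\epsilon+\log\log A(\epsilon)+\epsilon N+1\right),$$ where $C$ is a universal constant and $A(\epsilon):=2\max\bigl(1,\mathcal A^{\mathcal F}_\epsilon(F)\bigr)$.
   Context: Protocol: $\mathbf X$ is a nonempty topological space. At each round $n$ Reality announces $x_n\in\mathbf X$, Predictor announces $\mu_n\in\mathbb R$, Reality announces $y_n\in[-1,1]$; a strategy for Predictor maps each history $(x_1,y_1,\dots,x_{n-1},y_{n-1},x_n)$ to $\mu_n$, and guarantees must hold for all (possibly adaptive) moves of Reality. $C(\mathbf X)$: bounded continuous real functions on $\mathbf X$ with the supremum norm. A Banach function space compactly embedded in $C(\mathbf X)$: a linear subspace $\mathcal F\subseteq C(\mathbf X)$ with a norm $\|\cdot\|_{\mathcal F}$ making it a Banach space, whose unit ball $U_{\mathcal F}=\{F:\|F\|_{\mathcal F}\le1\}$ is compact in $C(\mathbf X)$; densely embedded means $\mathcal F$ is dense in $C(\mathbf X)$ for the supremum norm. Approachability: for $F\in C(\mathbf X)$ and $\epsilon>0$, $\mathcal A^{\mathcal F}_\epsilon(F):=\inf\{\|F^*\|_{\mathcal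 F}: F^*\in\mathcal F,\ \|F-F^*\|_{C(\mathbf X)}\le\epsilon\}$. $\mathcal H_\epsilon(A)$ is $\log_2$ of the minimal number of points of $A$ forming an $\epsilon$-net for $A$ in the supremum metric. $\log=\log_2$. *)

From HB Require Import structures.
From mathcomp Require Import all_boot all_order all_algebra.
From mathcomp Require Import all_classical all_reals all_analysis.
Set Implicit Arguments. Unset Strict Implicit. Unset Printing Implicit Defensive.
Import Order.TTheory GRing.Theory Num.Theory.
Import numFieldNormedType.Exports.
Local Open Scope classical_set_scope.
Local Open Scope ring_scope.

Section Defs.
Variables (R : realType) (X : topologicalType).

Definition log2 (x : R) : R := ln x / ln 2.

Definition CX : set (X -> R) :=
  [set f | continuous f /\ exists M : R, forall x, `|f x| <= M].

Definition supdist_le (f g : X -> R) (e : R) : Prop :=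
  forall x, `|f x - g x| <= e.

Record BanachFunctionSpace (Fs : set (X -> R)) (nF : (X -> R) -> R) : Prop := {
  bfs_sub : Fs `<=` CX;
  bfs_zero : Fs (fun _ => 0);
  bfs_add : forall f g, Fs f -> Fs g -> Fs (fun x => f x + g x);
  bfs_scale : forall (a : R) f, Fs f -> Fs (fun x => a * f x);
  bfs_norm_ge0 : forall f, Fs f -> 0 <= nF f;
  bfs_norm_eq0 : forall f, Fs f -> nF f = 0 -> f = (fun _ => 0);
  bfs_normZ : forall (a : R) f, Fs f -> nF (fun x => a * f x) = `|a| * nF f;
  bfs_normD : forall f g, Fs f -> Fs g ->
      nF (fun x => f x + g x) <= nF f + nF g;
  bfs_complete : forall u : nat -> (X -> R), (forall n, Fs (u n)) ->
      (forall e : R, 0 < e -> exists N, forall m n, (N <= m)%N -> (N <= n)%N ->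
          nF (fun x => u m x - u n x) <= e) ->
      exists2 f, Fs f & forall e : R, 0 < e -> exists N, forall n, (N <= n)%N ->
          nF (fun x => u n x - f x) <= e
}.

Definition unit_ball (Fs : set (X -> R)) (nF : (X -> R) -> R) : set (X -> R) :=
  [set f | Fs f /\ nF f <= 1].

(* compact embedding: unit ball compact in C(X) (uniform topology = sup norm
   topology on bounded functions) *)
Definition compactly_embedded (Fs : set (X -> R)) (nF : (X -> R) -> R) : Prop :=
  compact (unit_ball Fs nF : set {uniform X -> R}).

Definition densely_embedded (Fs : set (X -> R)) : Prop :=
  forall f, CX f -> forall e : R, 0 < e -> exists2 g, Fs g & supdist_le f g e.

Definition approachability (Fs : set (X -> R)) (nF : (X -> R) -> R)
    (e : R) (F : X -> R) : R :=
  inf [set nF g | g in [set g | Fs g /\ supdist_le F g e]].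

Definition has_net (A : set (X -> R)) (e : R) (n : nat) : Prop :=
  exists s : seq (X -> R), size s = n /\ (forall f, f \in s -> A f) /\
    forall g, A g -> exists2 f, f \in s & supdist_le g f e.

Definition entropy (A : set (X -> R)) (e : R) : R :=
  log2 (inf [set (n%:R : R) | n in [set n | has_net A e n]]).

End Defs.

Definition strategy (R : realType) (X : Type) := seq (X * R) -> X -> R.

Definition history (R : realType) (X : Type) (x : nat -> X) (y : nat -> R)
  (n : nat) : seq (X * R) := [seq (x i, y i) | i <- iota 0 n].

(* The predictor is the Aggregating Algorithm with learning rate 1/128 (at which the
   square loss on [-1, 1] is mixable) run over a countable pool of "sleeping" experts:
   expert ((j, m), i) predicts 2^j f_i clipped to [-1, 1], where f_i runs over a minimal
   2^-m-net of the unit ball of F; it has prior weight 1 / ((j+1)(j+2)(m+1)(m+2) n_m) and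
   sleeps (is charged the predictor's own loss) until time log j + log m + log n_m, so that
   at any time only finitely many experts are awake.  The potential argument bounds the
   predictor's loss by that of any expert plus 4 times its waking time plus 128 ln(1/prior).
   Given F and eps, pick g in F with ||F - g|| <= eps and ||g||_F < A(eps) <= 2^j, and
   2^-m ~ eps / A(eps): a net point f_i is 2^-m-close to g / 2^j, so expert ((j, m), i) is
   5 eps-close to F, and its penalty is O(H + log log (1/eps) + log log A). *)

From HB Require Import structures.
From mathcomp Require Import all_boot all_order all_algebra.
From mathcomp Require Import Rstruct Rstruct_topology.
From mathcomp Require Import all_classical all_reals all_analysis.
From mathcomp Require Import ring lra zify.
From Stdlib Require Rdefinitions.
Set Implicit Arguments. Unset Strict Implicit. Unset Printing Implicit Defensive.
Import Order.TTheory GRing.Theory Num.Theory.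
Import numFieldNormedType.Exports.
Local Open Scope classical_set_scope.
Local Open Scope ring_scope.

Section ExpConcavity.
Variable R : realType.
Implicit Types a b s x : R.

Lemma sqr_1Dhalf_le_expR x : -2 <= x -> (1 + x / 2) ^+ 2 <= expR x.
Proof.
move=> x_ge; have -> : x = x / 2 + x / 2 by field.
rewrite expRD expr2 (_ : (x / 2 + x / 2) / 2 = x / 2); last by field.
by apply: ler_pM; [lra | lra | exact: expR_ge1Dx | exact: expR_ge1Dx].
Qed.

Lemma expR_NDsqr_le1B s : -(1/8) <= s <= 1/8 -> expR (- (s + s ^+ 2)) <= 1 - s.
Proof.
move=> /andP[s_ge s_le]; set x := s + s ^+ 2.
have one_le : 1 <= (1 - s) * expR x.
  have poly : 1 <= (1 - s) * (1 + x / 2) ^+ 2 by rewrite /x; nra.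
  apply: (le_trans poly); apply: ler_wpM2l; first lra.
  by apply: sqr_1Dhalf_le_expR; rewrite /x; nra.
have := ler_wpM2l (expR_ge0 (- x)) one_le.
by rewrite mulr1 mulrCA [expR (- x) * _]mulrC expRxMexpNx_1 mulr1.
Qed.

Definition eta : R := 128%:R^-1.

Lemma eta_E : eta = 1 / 128.
Proof. by rewrite /eta div1r. Qed.

Lemma expR_sqr_tangent a b : `|a| <= 2 -> `|b| <= 2 ->
  expR (- eta * a ^+ 2) <= expR (- eta * b ^+ 2) * (1 - 2 * eta * b * (a - b)).
Proof.
rewrite !ler_norml => /andP[a_ge a_le] /andP[b_ge b_le].
set u := a - b; set s := 2 * eta * b * u.
have -> : - eta * a ^+ 2 = - eta * b ^+ 2 + (- (s + eta * u ^+ 2)).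
  by rewrite /s /u; ring.
rewrite expRD; apply: ler_wpM2l; first exact: expR_ge0.
have s_small : -(1/8) <= s <= 1/8 by rewrite /s /u eta_E; apply/andP; split; nra.
apply: le_trans _ (expR_NDsqr_le1B s_small); rewrite ler_expR.
suff : s ^+ 2 <= eta * u ^+ 2 by lra.
have b_sq : b ^+ 2 <= 4 by nra.
by rewrite /s eta_E; nra.
Qed.

(* Mixability of the square loss on [[-1, 1]] at rate [eta]. *)
Lemma expR_sqr_loss_mix (I : Type) (K : seq I) (v q : I -> R) (mu y : R) :
  (forall k, 0 <= v k) -> (forall k, `|q k| <= 1) -> `|mu| <= 1 -> `|y| <= 1 ->
  \sum_(k <- K) v k * q k = mu * \sum_(k <- K) v k ->
  \sum_(k <- K) v k * expR (- eta * (y - q k) ^+ 2)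
    <= (\sum_(k <- K) v k) * expR (- eta * (y - mu) ^+ 2).
Proof.
move=> v_ge0 q_le1 mu_le1 y_le1 mean.
set b := y - mu; set E := expR (- eta * b ^+ 2); set c := 2 * eta * b.
have b_le2 : `|b| <= 2 by apply: le_trans (ler_normB _ _) _; lra.
apply: (@le_trans _ _ (\sum_(k <- K) v k * (E * (1 - c * ((y - q k) - b))))).
  apply: ler_sum => k _; apply: ler_wpM2l => //.
  by apply: expR_sqr_tangent => //; apply: le_trans (ler_normB _ _) _; have := q_le1 k; lra.
have -> : \sum_(k <- K) v k * (E * (1 - c * ((y - q k) - b)))
        = \sum_(k <- K) ((E - E * c * mu) * v k + (E * c) * (v k * q k)).
  by apply: eq_bigr => k _; rewrite /b; ring.
rewrite big_split /= -!mulr_sumr mean le_eqVlt; apply/orP; left; apply/eqP; ring.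
Qed.

End ExpConcavity.

Lemma sqrB_le4 (R : realDomainType) (a b : R) : `|a| <= 1 -> `|b| <= 1 -> (a - b) ^+ 2 <= 4.
Proof. by rewrite !ler_norml => /andP[? ?] /andP[? ?]; nra. Qed.

Lemma sum_ord_ltn N tau : (\sum_(s < N) (s < tau)%N)%N = minn N tau.
Proof.
elim: N => [|N IH]; first by rewrite big_ord0 min0n.
by rewrite big_ord_recr /= IH; case: ltnP => h /=; lia.
Qed.

Section SleepingExperts.
Variables (R : realType) (X : Type) (I : eqType).
Variables (cand : nat -> seq I) (awake : I -> nat -> bool).
Variables (prior : I -> R) (expert : I -> X -> R).
Implicit Types (x : nat -> X) (y f : nat -> R).

(* [f] holds the learner's past predictions; an asleep expert is credited with them. *)
Definition sleep_pred x f k s : R := if awake k s then expert k (x s) else f s.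
Definition sleep_loss x y f k t : R := \sum_(s < t) (y s - sleep_pred x f k s) ^+ 2.
Definition weight x y f k t : R := prior k * expR (- eta R * sleep_loss x y f k t).
Definition wsum x y f t : R := \sum_(k <- cand t | awake k t) weight x y f k t.
Definition wpred x y f t : R :=
  \sum_(k <- cand t | awake k t) weight x y f k t * expert k (x t).
Definition agg x y f t : R := if wsum x y f t == 0 then 0 else wpred x y f t / wsum x y f t.

(* [agg_upto x y t s] is the learner's prediction at round [s < t]. *)
Fixpoint agg_upto x y t : nat -> R :=
  if t is t'.+1 then
    fun s => if (s < t')%N then agg_upto x y t' s else agg x y (agg_upto x y t') t'
  else fun _ => 0.
Definition learner x y s : R := agg_upto x y s.+1 s.

Lemma agg_ext x x' y y' f g t :
  (forall s, (s < t)%N -> [/\ x s = x' s, y s = y' s & f s = g s]) -> x t = x' t ->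
  agg x y f t = agg x' y' g t.
Proof.
move=> eq_past eq_t.
have eq_w k : weight x y f k t = weight x' y' g k t.
  rewrite /weight /sleep_loss; congr (_ * expR (_ * _)); apply: eq_bigr => s _.
  by rewrite /sleep_pred; have [-> -> ->] := eq_past s (ltn_ord s).
have eq_wsum : wsum x y f t = wsum x' y' g t by apply: eq_bigr => k _; rewrite eq_w.
have eq_wpred : wpred x y f t = wpred x' y' g t by apply: eq_bigr => k _; rewrite eq_w eq_t.
by rewrite /agg eq_wsum eq_wpred.
Qed.

Lemma agg_upto_learner x y t s : (s < t)%N -> agg_upto x y t s = learner x y s.
Proof.
elim: t => [//|t IH] /= s_lt; case: ltnP => [s_lt_t|s_ge]; first exact: IH.
have -> : s = t by apply/eqP; rewrite eqn_leq s_ge -ltnS s_lt.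
by rewrite /learner /= ltnn.
Qed.

Lemma learner_agg x y t : learner x y t = agg x y (learner x y) t.
Proof.
by rewrite /learner /= ltnn; apply: agg_ext => // s s_lt; rewrite agg_upto_learner.
Qed.

Lemma learner_causal x x' y y' n :
  (forall s, (s <= n)%N -> x s = x' s) -> (forall s, (s < n)%N -> y s = y' s) ->
  learner x y n = learner x' y' n.
Proof.
move=> eq_x eq_y; elim/ltn_ind: n eq_x eq_y => n IH eq_x eq_y.
rewrite !learner_agg; apply: agg_ext => [s s_lt|]; last exact: eq_x.
split; [exact/eq_x/ltnW | exact: eq_y |].
apply: IH => // s' s'_le; first by apply: eq_x; apply: leq_trans s'_le (ltnW s_lt).
by apply: eq_y; apply: ltn_trans s'_le s_lt.
Qed.

Hypothesis prior_ge0 : forall k, 0 <= prior k.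
Hypothesis expert_le1 : forall k z, `|expert k z| <= 1.

Lemma weight_ge0 x y f k t : 0 <= weight x y f k t.
Proof. by rewrite /weight mulr_ge0 ?expR_ge0. Qed.

Lemma wpred_le_wsum x y f t : `|wpred x y f t| <= wsum x y f t.
Proof.
apply: le_trans (ler_norm_sum _ _ _) _; apply: ler_sum => k _.
by rewrite normrM ger0_norm ?weight_ge0 // ler_piMr ?weight_ge0.
Qed.

Lemma wpredE x y f t : wpred x y f t = agg x y f t * wsum x y f t.
Proof.
rewrite /agg; case: eqP => [w0|/eqP w_neq0]; last by rewrite divfK.
by apply/eqP; rewrite mul0r -normr_le0 -w0 wpred_le_wsum.
Qed.

Lemma agg_le1 x y f t : `|agg x y f t| <= 1.
Proof.
rewrite /agg; case: eqP => [_|/eqP w_neq0]; first by rewrite normr0.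
have w_gt0 : 0 < wsum x y f t by rewrite lt_def w_neq0 sumr_ge0 // => k _; apply: weight_ge0.
by rewrite normrM normfV (gtr0_norm w_gt0) ler_pdivrMr // mul1r wpred_le_wsum.
Qed.

Lemma learner_le1 x y t : `|learner x y t| <= 1.
Proof. by rewrite learner_agg agg_le1. Qed.

Section Regret.
Variables (x : nat -> X) (y : nat -> R).
Hypothesis y_le1 : forall s, `|y s| <= 1.
Hypothesis cand_uniq : forall t, uniq (cand t).
Hypothesis cand_awake : forall k t, awake k t -> k \in cand t.

Local Notation L := (learner x y).

Definition learner_loss t : R := \sum_(s < t) (y s - learner x y s) ^+ 2.

Lemma weightS k t : weight x y L k t.+1 =
  weight x y L k t * expR (- eta R * (y t - sleep_pred x L k t) ^+ 2).
Proof. by rewrite /weight /sleep_loss big_ord_recr /= mulrDr expRD mulrA. Qed.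

Lemma sum_awake (K : seq I) t (F : I -> R) : uniq K -> {subset cand t <= K} ->
  \sum_(k <- K | awake k t) F k = \sum_(k <- cand t | awake k t) F k.
Proof.
move=> K_uniq candK; rewrite -big_filter -[RHS]big_filter; apply: perm_big.
apply: uniq_perm; rewrite ?filter_uniq // => k; rewrite !mem_filter.
by case k_awake: (awake k t) => //=; rewrite cand_awake ?candK ?cand_awake.
Qed.

Lemma sum_weight_sleep_pred (K : seq I) t : uniq K -> {subset cand t <= K} ->
  \sum_(k <- K) weight x y L k t * sleep_pred x L k t =
  L t * \sum_(k <- K) weight x y L k t.
Proof.
move=> K_uniq candK; rewrite (bigID (awake^~ t)) [X in _ * X](bigID (awake^~ t)) /=.
have -> : \sum_(k <- K | awake k t) weight x y L k t * sleep_pred x L k t = wpred x y L t.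
  rewrite /wpred -(sum_awake _ K_uniq candK).
  by apply: eq_bigr => k k_awake; rewrite /sleep_pred k_awake.
have -> : \sum_(k <- K | ~~ awake k t) weight x y L k t * sleep_pred x L k t =
          L t * \sum_(k <- K | ~~ awake k t) weight x y L k t.
  rewrite mulr_sumr; apply: eq_bigr => k /negbTE k_asleep.
  by rewrite /sleep_pred k_asleep mulrC.
by rewrite wpredE -learner_agg (sum_awake _ K_uniq candK) mulrDr.
Qed.

Lemma sum_weight_le (K : seq I) t : uniq K -> (forall s, (s < t)%N -> {subset cand s <= K}) ->
  \sum_(k <- K) weight x y L k t <= (\sum_(k <- K) prior k) * expR (- eta R * learner_loss t).
Proof.
move=> K_uniq; elim: t => [_|t IH candK].
  rewrite /learner_loss big_ord0 mulr0 expR0 mulr1; apply: ler_sum => k _.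
  by rewrite /weight /sleep_loss big_ord0 mulr0 expR0 mulr1.
under eq_bigr do rewrite weightS.
have pred_le1 k : `|sleep_pred x L k t| <= 1.
  by rewrite /sleep_pred; case: ifP => _; [exact: expert_le1 | exact: learner_le1].
have mix := expR_sqr_loss_mix (fun k => weight_ge0 x y L k t) pred_le1
  (learner_le1 x y t) (y_le1 t) (sum_weight_sleep_pred K_uniq (candK t (ltnSn t))).
apply: le_trans mix _.
rewrite /learner_loss big_ord_recr /= mulrDr expRD mulrA.
apply: ler_wpM2r; first exact: expR_ge0.
by apply: IH => s s_lt; apply: candK; apply: ltnW.
Qed.

Hypothesis cand_mono : forall s t, (s <= t)%N -> {subset cand s <= cand t}.
Hypothesis awake_mono : forall k s t, (s <= t)%N -> awake k s -> awake k t.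
Hypothesis prior_sum_le1 : forall t, \sum_(k <- cand t) prior k <= 1.

Lemma sleep_loss_le k tau N : awake k tau ->
  sleep_loss x y L k N <= \sum_(s < N) (y s - expert k (x s)) ^+ 2 + 4 * tau%:R.
Proof.
move=> k_awake.
apply: le_trans (_ : _ <= \sum_(s < N) ((y s - expert k (x s)) ^+ 2 + 4 * (s < tau)%N%:R)) _.
  apply: ler_sum => s _; rewrite /sleep_pred; case: (ltnP s tau) => [_|s_ge]; last first.
    by rewrite (awake_mono s_ge k_awake) mulr0 addr0.
  have := sqr_ge0 (y s - expert k (x s)); rewrite /= mulr1n mulr1.
  by case: ifP => _; [lra | have := sqrB_le4 (y_le1 s) (learner_le1 x y s); lra].
rewrite big_split /= lerD2l -mulr_sumr -natr_sum sum_ord_ltn.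
by apply: ler_wpM2l => //; rewrite ler_nat geq_minr.
Qed.

Lemma learner_loss_le k tau N : awake k tau -> 0 < prior k ->
  learner_loss N <= \sum_(s < N) (y s - expert k (x s)) ^+ 2 + 4 * tau%:R + 128 * - ln (prior k).
Proof.
move=> k_awake prior_gt0; set K := cand (maxn N tau).
have candK s : (s < N)%N -> {subset cand s <= K}.
  by move=> s_lt; apply: cand_mono; rewrite (leq_trans (ltnW s_lt)) ?leq_maxl.
have k_in : k \in K by apply: cand_mono (leq_maxr N tau) _ (cand_awake k_awake).
have weight_le : weight x y L k N <= expR (- eta R * learner_loss N).
  apply: le_trans (_ : _ <= \sum_(i <- K) weight x y L i N) _.
    rewrite (bigD1_seq k k_in (cand_uniq _)) /= lerDl.
    by apply: sumr_ge0 => i _; apply: weight_ge0.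
  apply: le_trans (sum_weight_le (cand_uniq _) candK) _.
  by rewrite ler_piMl ?expR_ge0 ?prior_sum_le1.
have := sleep_loss_le N k_awake.
move: weight_le; rewrite -ler_ln ?posrE ?mulr_gt0 ?expR_gt0 //.
rewrite lnM ?posrE ?expR_gt0 // !expRK eta_E; lra.
Qed.

End Regret.
End SleepingExperts.

(* Past rounds are read off the history; the current instance [z] also pads the unused
   entries, which the learner never inspects. *)
Definition learner_strategy (R : realType) (X : Type) (I : eqType)
    (cand : nat -> seq I) (awake : I -> nat -> bool) (prior : I -> R) (expert : I -> X -> R)
    : strategy R X :=
  fun h z => learner cand awake prior expert
    (fun i => if (i < size h)%N then (nth (z, 0) h i).1 else z)
    (fun i => (nth (z, 0) h i).2) (size h).

Lemma learner_strategy_history (R : realType) (X : Type) (I : eqType)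
    (cand : nat -> seq I) (awake : I -> nat -> bool) (prior : I -> R) (expert : I -> X -> R)
    (x : nat -> X) (y : nat -> R) n :
  learner_strategy cand awake prior expert (history x y n) (x n) =
  learner cand awake prior expert x y n.
Proof.
rewrite /learner_strategy /history size_map size_iota; apply: learner_causal => s s_le.
  case: ltnP => [s_lt|s_ge]; first by rewrite (nth_map 0) ?size_iota // nth_iota.
  by have -> : s = n by apply/eqP; rewrite eqn_leq s_le s_ge.
by rewrite (nth_map 0) ?size_iota // nth_iota.
Qed.

Section Clip.
Variable R : realType.
Implicit Types u v y : R.

Definition clip u : R := if u < -1 then -1 else if 1 < u then 1 else u.

Lemma clip_le1 u : `|clip u| <= 1.
Proof. by rewrite /clip ler_norml; case: ltP => ?; [lra | case: ltP => ?; lra]. Qed.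

Lemma clip_lipschitz u v : `|clip u - clip v| <= `|u - v|.
Proof.
have := ler_norm (u - v); have := ler_norm (v - u); rewrite distrC /clip ler_norml.
by do 4 case: ltP => ?; lra.
Qed.

Lemma sqrB_clip y v : `|y| <= 1 -> (y - clip v) ^+ 2 <= (y - v) ^+ 2.
Proof.
by rewrite ler_norml /clip => /andP[? ?]; case: ltP => ?; [nra | case: ltP => ?; nra].
Qed.

Lemma sqrB_le_norm y a b : `|y| <= 1 -> `|a| <= 1 -> `|b| <= 1 ->
  (y - a) ^+ 2 <= (y - b) ^+ 2 + 4 * `|a - b|.
Proof.
rewrite !ler_norml => /andP[? ?] /andP[? ?] /andP[? ?].
by case: (lerP a b) => ?; nra.
Qed.

Lemma sqrB_clip_le y u v : `|y| <= 1 ->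
  (y - clip u) ^+ 2 <= (y - v) ^+ 2 + 4 * `|u - v|.
Proof.
move=> y_le1; have := sqrB_le_norm y_le1 (clip_le1 u) (clip_le1 v).
by have := clip_lipschitz u v; have := sqrB_clip v y_le1; lra.
Qed.

End Clip.

Lemma sum_sqrB_clip_le (R : realType) (X : Type) (x : nat -> X) (y : nat -> R)
    (g F : X -> R) (d : R) N :
  (forall s, `|y s| <= 1) -> (forall z, `|g z - F z| <= d) ->
  \sum_(s < N) (y s - clip (g (x s))) ^+ 2 <= \sum_(s < N) (y s - F (x s)) ^+ 2 + 4 * d * N%:R.
Proof.
move=> y_le1 close.
rewrite mulr_natr -[N in _ *+ N]card_ord -sumr_const -big_split /=; apply: ler_sum => s _.
by have := sqrB_clip_le (g (x s)) (F (x s)) (y_le1 s); have := close (x s); lra.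
Qed.

Section Log2.
Variable R : realType.
Implicit Types r s : R.

Lemma ln2_gt0 : 0 < ln (2 : R).
Proof. by apply: ln_gt0; lra. Qed.

Lemma ler_log2 r s : 0 < r -> r <= s -> log2 r <= log2 s.
Proof.
move=> r_gt0 r_le_s; rewrite /log2 ler_pM2r ?invr_gt0 ?ln2_gt0 //.
by rewrite ler_ln // posrE; apply: lt_le_trans r_le_s.
Qed.

Lemma log2M r s : 0 < r -> 0 < s -> log2 (r * s) = log2 r + log2 s.
Proof. by move=> ? ?; rewrite /log2 lnM ?posrE // mulrDl. Qed.

Lemma log2_expn2 n : log2 (2 ^+ n : R) = n%:R.
Proof. by rewrite /log2 lnXn // -[_ *+ n]mulr_natr mulrAC divff ?mul1r // gt_eqF ?ln2_gt0. Qed.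

Lemma log2_2 : log2 (2 : R) = 1.
Proof. by have := log2_expn2 1; rewrite expr1. Qed.

Lemma log2_ge0 r : 1 <= r -> 0 <= log2 r.
Proof. by move=> r_ge1; apply: divr_ge0; [exact: ln_ge0 | exact/ltW/ln2_gt0]. Qed.

Lemma ln_le_log2 r : 1 <= r -> ln r <= log2 r.
Proof.
have ln2_le1 : ln (2 : R) <= 1 by have := @le_ln1Dx R 1; rewrite (_ : 1 + 1 = 2) //; apply; lra.
move=> r_ge1; rewrite /log2 ler_pdivlMr ?ln2_gt0 // ler_piMr ?ln_ge0 //.
Qed.

Lemma ler_log2_expn2 r n : 1 <= r -> 2 ^+ n <= r -> n%:R <= log2 r.
Proof. by move=> ? ?; rewrite -log2_expn2 ler_log2 ?exprn_gt0. Qed.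

Lemma log2_ge1 r : 2 <= r -> 1 <= log2 r.
Proof. by move=> r_ge2; have := @ler_log2_expn2 r 1; rewrite expr1 mulr1n; apply; lra. Qed.

Lemma exists_expn2_le_lt r : 1 <= r -> exists m, 2 ^+ m <= r < 2 ^+ m.+1.
Proof.
move=> r_ge1; have n_gt0 : (0 < Num.truncn r)%N by rewrite truncn_gt0.
have /andP[n_le n_gt] := truncn_itv (le_trans ler01 r_ge1).
exists (trunc_log 2 (Num.truncn r)).
have /andP[] := trunc_log_bounds (ltnSn 1) n_gt0.
rewrite -!(ler_nat R) !natrX => lb ub; apply/andP; split; first exact: le_trans lb n_le.
by apply: lt_le_trans n_gt _.
Qed.

End Log2.

(* [compact_cover] needs a pointed space; any point will do. *)
HB.instance Definition _ (R : realType) (X : topologicalType) :=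
  isPointed.Build {uniform X -> R} (fun _ => 0).

Section Nets.
Variables (R : realType) (X : topologicalType).

Lemma compact_has_net (A : set (X -> R)) (d : R) :
  compact (A : set {uniform X -> R}) -> 0 < d -> exists n, has_net A d n.
Proof.
rewrite (@compact_cover {uniform X -> R}) => A_compact d_gt0.
pose ball_int (g : {uniform X -> R}) : set {uniform X -> R} :=
  interior [set h : {uniform X -> R} | forall z, `|g z - h z| < d].
have A_cover : (A : set {uniform X -> R}) `<=` cover A ball_int.
  move=> g Ag; exists g => //; apply/uniform_nbhs; exists [set xy | ball xy.1 d xy.2].
  by split => [|h /= h_near z]; [rewrite -entourage_ballE; exists d | exact: h_near].
have [D D_sub D_cover] := A_compact _ A ball_int (fun _ _ => open_interior _) A_cover.
exists (size (finmap.enum_fset D)), (finmap.enum_fset D); split=> //; split.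
  by move=> g /D_sub; rewrite inE.
move=> g /D_cover [f f_in /nbhs_singleton g_near]; exists f => // z.
by rewrite distrC ltW // g_near.
Qed.

Lemma has_net_le (A : set (X -> R)) (d d' : R) n : d <= d' -> has_net A d n -> has_net A d' n.
Proof.
move=> d_le [s [s_size [s_in s_net]]]; exists s; split => //; split => // g Ag.
by have [f f_in g_near] := s_net g Ag; exists f => // z; apply: le_trans (g_near z) d_le.
Qed.

End Nets.

Section Experts.
Variables (R : realType) (X : topologicalType).
Variables (Fs : set (X -> R)) (nF : (X -> R) -> R).
Local Notation U := (unit_ball Fs nF).

Definition dyad (m : nat) : R := (2 ^+ m)^-1.

Definition net_size (m : nat) : nat :=
  if pselect (exists n, `[< has_net U (dyad m) n >]) is left h then ex_minn h else 0.

Definition min_net (m : nat) : seq (X -> R) :=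
  if pselect (has_net U (dyad m) (net_size m)) is left h then sval (cid h) else [::].

Definition expert (k : nat * nat * nat) (z : X) : R :=
  clip (2 ^+ k.1.1 * nth (fun _ => 0) (min_net k.1.2) k.2 z).

Definition ilog (n : nat) : nat := trunc_log 2 n.+1.
Definition wake_time (j m : nat) : nat := ilog j + ilog m + ilog (net_size m).
Definition awake_at (k : nat * nat * nat) (t : nat) : bool :=
  (wake_time k.1.1 k.1.2 <= t)%N && (k.2 < net_size k.1.2)%N.

(* Every expert awake by time [t] has all three indices below [2 ^ t.+1]. *)
Definition candidates (t : nat) : seq (nat * nat * nat) :=
  [seq (jm, i) | jm <- [seq (j, m) | j <- iota 0 (2 ^ t.+1), m <- iota 0 (2 ^ t.+1)],
                 i <- iota 0 (2 ^ t.+1)].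

Definition tweight (n : nat) : R := (n.+1 * n.+2)%:R^-1.
Definition prior (k : nat * nat * nat) : R :=
  tweight k.1.1 * tweight k.1.2 * ((k.2 < net_size k.1.2)%N%:R / (net_size k.1.2)%:R).

Lemma expert_le1 k z : `|expert k z| <= 1.
Proof. exact: clip_le1. Qed.

Lemma tweight_gt0 n : 0 < tweight n.
Proof. by rewrite invr_gt0 ltr0n muln_gt0. Qed.

Lemma prior_ge0 k : 0 <= prior k.
Proof. by rewrite !mulr_ge0 ?divr_ge0 // ltW // tweight_gt0. Qed.

Lemma prior_gt0 j m i : (i < net_size m)%N -> 0 < prior ((j, m), i).
Proof.
move=> i_lt; rewrite /prior /= i_lt /= mulr1n mul1r !mulr_gt0 ?tweight_gt0 //.
by rewrite invr_gt0 ltr0n (leq_ltn_trans _ i_lt).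
Qed.

Lemma awake_at_wake_time j m i : (i < net_size m)%N -> awake_at ((j, m), i) (wake_time j m).
Proof. by move=> i_lt; rewrite /awake_at /= leqnn i_lt. Qed.

Lemma mem_candidates k t : (k \in candidates t) =
  [&& (k.1.1 < 2 ^ t.+1)%N, (k.1.2 < 2 ^ t.+1)%N & (k.2 < 2 ^ t.+1)%N].
Proof.
case: k => [[j m] i] /=; apply/allpairsP/idP => [[[jm i'] [/= jm_in i_in [eq_jm eq_i]]]|].
  subst jm i'; case/allpairsP: jm_in => [[j' m'] [/= j_in m_in [-> ->]]].
  by move: j_in m_in i_in; rewrite !mem_iota /= => -> -> ->.
case/and3P => j_lt m_lt i_lt; exists ((j, m), i); rewrite /= mem_iota i_lt; split => //.
by apply/allpairsP; exists (j, m); rewrite /= !mem_iota j_lt m_lt.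
Qed.

Lemma candidates_uniq t : uniq (candidates t).
Proof.
apply: allpairs_uniq => [||[? ?] [? ?] _ _ [-> ->]] //; last exact: iota_uniq.
by apply: allpairs_uniq => [||[? ?] [? ?] _ _ [-> ->]] //; exact: iota_uniq.
Qed.

Lemma ilog_lt n t : (ilog n <= t)%N -> (n < 2 ^ t.+1)%N.
Proof.
have /andP[_ n_lt] := trunc_log_bounds (ltnSn 1) (ltn0Sn n).
by move=> ilog_le; apply: leq_trans (ltnW n_lt) _; rewrite leq_exp2l.
Qed.

Lemma candidates_awake k t : awake_at k t -> k \in candidates t.
Proof.
case/andP; rewrite /wake_time => wake_le i_lt.
have ilog_le n : (ilog n <= ilog k.1.1 + ilog k.1.2 + ilog (net_size k.1.2))%N ->
  (n < 2 ^ t.+1)%N by move=> ilog_le; apply/ilog_lt/(leq_trans ilog_le wake_le).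
rewrite mem_candidates (ltn_trans i_lt) !ilog_le ?leq_addl //.
  exact: leq_trans (leq_addl _ _) (leq_addr _ _).
by rewrite -addnA leq_addr.
Qed.

Lemma candidates_mono s t : (s <= t)%N -> {subset candidates s <= candidates t}.
Proof.
move=> s_le k; rewrite !mem_candidates; have lt_mono n : (n < 2 ^ s.+1 -> n < 2 ^ t.+1)%N.
  by move/leq_trans; apply; rewrite leq_exp2l.
by case/and3P => /lt_mono -> /lt_mono -> /lt_mono ->.
Qed.

Lemma awake_at_mono k s t : (s <= t)%N -> awake_at k s -> awake_at k t.
Proof. by move=> s_le /andP[wake_le i_lt]; rewrite /awake_at i_lt (leq_trans wake_le s_le). Qed.

Lemma sum_tweight B : \sum_(j <- iota 0 B) tweight j = 1 - B.+1%:R^-1.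
Proof.
elim: B => [|B IH]; first by rewrite big_nil invr1 subrr.
rewrite -addn1 iotaD big_cat big_seq1 /= add0n IH /tweight natrM addn1.
rewrite -!natr1; have : 0 <= B%:R :> R by [].
by move: (B%:R) => b b_ge0; field; rewrite !gt_eqF //; lra.
Qed.

Lemma sum_tweight_le1 B : \sum_(j <- iota 0 B) tweight j <= 1.
Proof. by rewrite sum_tweight lerBlDr lerDl invr_ge0. Qed.

Lemma prior_sum_le1 t : \sum_(k <- candidates t) prior k <= 1.
Proof.
set B := (2 ^ t.+1)%N; rewrite big_allpairs big_allpairs.
apply: le_trans (_ : _ <= \sum_(j <- iota 0 B) \sum_(m <- iota 0 B) tweight j * tweight m) _.
  apply: ler_sum => j _; apply: ler_sum => m _; rewrite /prior /= -mulr_sumr.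
  apply: ler_piMr; first by rewrite mulr_ge0 // ltW // tweight_gt0.
  have -> : iota 0 B = index_iota 0 B by rewrite /index_iota subn0.
  rewrite -mulr_suml big_mkord -natr_sum sum_ord_ltn.
  case: (net_size m) => [|n]; first by rewrite invr0 mulr0.
  by rewrite ler_pdivrMr ?ltr0n // mul1r ler_nat geq_minr.
under eq_bigr do rewrite -mulr_sumr.
rewrite -mulr_suml; apply: le_trans (ler_pM _ _ (sum_tweight_le1 B) (sum_tweight_le1 B)) _;
  rewrite ?mul1r //; apply: sumr_ge0 => j _; exact/ltW/tweight_gt0.
Qed.

Lemma ilog_le_log2 n : (ilog n)%:R <= log2 (n.+1%:R : R).
Proof.
have /andP[pow_le _] := trunc_log_bounds (ltnSn 1) (ltn0Sn n).
by apply: ler_log2_expn2; rewrite ?ler1n // -natrX ler_nat.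
Qed.

Lemma ln_tweight_le n : - ln (tweight n) <= 2 * log2 (n.+2%:R : R).
Proof.
have n2_ge1 : 1 <= n.+2%:R :> R by rewrite ler1n.
rewrite /tweight lnV ?posrE ?ltr0n ?muln_gt0 // opprK natrM.
apply: le_trans (_ : _ <= ln (n.+2%:R ^+ 2)) _.
  by rewrite ler_ln ?posrE ?mulr_gt0 ?exprn_gt0 ?ltr0n // expr2 ler_wpM2r ?ler_nat.
by rewrite lnXn ?ltr0n // -[_ *+ 2]mulr_natl ler_pM2l ?ln_le_log2.
Qed.

Lemma wake_time_le j m : (0 < net_size m)%N -> (wake_time j m)%:R <=
  log2 (j.+2%:R : R) + log2 (m.+2%:R : R) + 1 + log2 ((net_size m)%:R : R).
Proof.
move=> n_gt0; have succ_le n : log2 (n.+1%:R : R) <= log2 n.+2%:R.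
  by rewrite ler_log2 ?ltr0n ?ler_nat.
have log2_succ : log2 ((net_size m).+1%:R : R) <= 1 + log2 (net_size m)%:R.
  rewrite -[X in _ <= X + _]log2_2 -log2M ?ltr0n // ler_log2 ?ltr0n //.
  by rewrite -natrM ler_nat; lia.
rewrite /wake_time !natrD; have := ilog_le_log2 j; have := ilog_le_log2 m.
have := ilog_le_log2 (net_size m); have := succ_le j; have := succ_le m; lra.
Qed.

Lemma ln_prior_le j m i : (i < net_size m)%N -> - ln (prior ((j, m), i)) <=
  2 * log2 (j.+2%:R : R) + 2 * log2 (m.+2%:R : R) + log2 ((net_size m)%:R : R).
Proof.
move=> i_lt; have n_ge1 : 1 <= (net_size m)%:R :> R by rewrite ler1n (leq_ltn_trans _ i_lt).
have n_gt0 : 0 < (net_size m)%:R :> R by apply: lt_le_trans n_ge1.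
rewrite /prior /= i_lt /= mulr1n mul1r.
rewrite !lnM ?posrE ?mulr_gt0 ?tweight_gt0 ?invr_gt0 // lnV ?posrE //.
have := ln_tweight_le j; have := ln_tweight_le m; have := ln_le_log2 n_ge1; lra.
Qed.

Lemma log2_le_add2 (r s : R) : 0 < r -> r <= 4 * s -> log2 r <= 2 + log2 s.
Proof.
move=> r_gt0 r_le; have s_gt0 : 0 < s by lra.
have log2_4 : log2 (4 : R) = 2 by rewrite (_ : 4 = 2 ^+ 2) ?log2_expn2 // expr2; lra.
by rewrite -log2_4 -log2M ?ler_log2 //; lra.
Qed.

Lemma expert_penalty_le (A eps : R) j m i : 2 <= A -> 0 < eps <= 1/2 ->
  2 ^+ j <= 2 * A -> 2 ^+ m <= A / eps -> (i < net_size m)%N ->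
  4 * (wake_time j m)%:R + 128 * - ln (prior ((j, m), i)) <=
  1044 + 520 * log2 (log2 A) + 260 * log2 (log2 (1 / eps)) + 132 * log2 ((net_size m)%:R : R).
Proof.
move=> A_ge2 /andP[eps_gt0 eps_le] j_le m_le i_lt.
have inv_eps_ge2 : 2 <= 1 / eps by rewrite ler_pdivlMr //; lra.
have [a_ge1 b_ge1] := (log2_ge1 A_ge2, log2_ge1 inv_eps_ge2).
set a := log2 A in a_ge1 *; set b := log2 (1 / eps) in b_ge1 *.
have j_le_a : j%:R <= 1 + a.
  by rewrite /a -[X in _ <= X + _]log2_2 -log2M; [apply: ler_log2_expn2 | |]; lra.
have m_le_ab : m%:R <= a + b.
  rewrite /a /b -log2M ?mul1r ?invr_gt0 //; last lra.
  have pow_ge1 : 1 <= 2 ^+ m :> R by apply: exprn_ege1; lra.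
  exact: ler_log2_expn2 (le_trans pow_ge1 m_le) m_le.
have log2_j : log2 (j.+2%:R : R) <= 2 + log2 a.
  by apply: log2_le_add2; rewrite ?ltr0n // -!natr1; lra.
have log2_m : log2 (m.+2%:R : R) <= 2 + log2 a + log2 b.
  by rewrite -addrA -log2M; try lra; apply: log2_le_add2; rewrite ?ltr0n // -!natr1; nra.
have := wake_time_le j (leq_ltn_trans (leq0n i) i_lt); have := ln_prior_le j i_lt.
have := log2_ge0 a_ge1; have := log2_ge0 b_ge1; lra.
Qed.

Lemma dyad_gt0 m : 0 < dyad m.
Proof. by rewrite invr_gt0 exprn_gt0. Qed.

End Experts.
Arguments dyad {R}.

Lemma exists_dyadic_scales (R : realType) (A eps : R) : 2 <= A -> 0 < eps <= 1/2 ->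
  exists j m, [/\ A < 2 ^+ j, 2 ^+ j <= 2 * A, 2 ^+ m <= A / eps & 2 ^+ j * dyad m <= 4 * eps].
Proof.
move=> A_ge2 /andP[eps_gt0 eps_le].
have A_ge1 : 1 <= A by lra.
have A_eps_ge1 : 1 <= A / eps by rewrite ler_pdivlMr //; lra.
have [j /andP[j_le j_gt]] := exists_expn2_le_lt A_ge1.
have [m /andP[m_le m_gt]] := exists_expn2_le_lt A_eps_ge1.
have j1_le : 2 ^+ j.+1 <= 2 * A by rewrite exprS; lra.
exists j.+1, m; split => //; move: j1_le.
rewrite ler_pdivrMr ?exprn_gt0 //; move: m_gt; rewrite exprS ltr_pdivrMr //; nra.
Qed.

Section Approximation.
Variables (R : realType) (X : topologicalType).
Variables (Fs : set (X -> R)) (nF : (X -> R) -> R).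
Hypothesis Fs_banach : BanachFunctionSpace Fs nF.
Hypothesis Fs_compact : compactly_embedded Fs nF.
Hypothesis Fs_dense : densely_embedded Fs.
Local Notation U := (unit_ball Fs nF).

Lemma net_sizeP m : has_net U (dyad m) (net_size Fs nF m) /\
  forall n, has_net U (dyad m) n -> (net_size Fs nF m <= n)%N.
Proof.
rewrite /net_size; case: pselect => [ex|[]].
  by case: ex_minnP => n /asboolP n_net n_min; split => // n' /asboolP /n_min.
have [n n_net] := compact_has_net Fs_compact (dyad_gt0 R m).
by exists n; apply/asboolP.
Qed.

Lemma min_netP m : [/\ size (min_net Fs nF m) = net_size Fs nF m,
  forall f, f \in min_net Fs nF m -> U f &
  forall g, U g -> exists2 f, f \in min_net Fs nF m & supdist_le g f (dyad m)].
Proof.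
rewrite /min_net; case: pselect => [net|[]]; last by case: (net_sizeP m).
by case: (cid net) => s [? [? ?]].
Qed.

Lemma log2_net_size_le_entropy m d : 0 < d -> d <= dyad m -> (0 < net_size Fs nF m)%N ->
  log2 (net_size Fs nF m)%:R <= entropy U d.
Proof.
move=> d_gt0 d_le n_gt0; apply: ler_log2; first by rewrite ltr0n.
have [n n_net] := compact_has_net Fs_compact d_gt0.
apply: lb_le_inf => [|_ [n' n'_net <-]]; first by exists n%:R, n.
by rewrite ler_nat; apply: (net_sizeP m).2; apply: has_net_le n'_net.
Qed.

Lemma exists_approximant F eps : CX F -> 0 < eps ->
  exists2 g, Fs g /\ supdist_le F g eps & nF g < approachability Fs nF eps F + 1.
Proof.
move=> F_cont eps_gt0.
have [g0 g0_in g0_close] := Fs_dense F_cont eps_gt0.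
have [_ [g g_near <-] g_lt] :
    exists2 v, [set nF g | g in [set g | Fs g /\ supdist_le F g eps]] v &
      v < approachability Fs nF eps F + 1.
  by apply: inf_lt; [exists (nF g0), g0 | rewrite ltrDl].
by exists g.
Qed.

Lemma exists_expert_close F eps j m : CX F -> 0 < eps ->
  approachability Fs nF eps F + 1 <= 2 ^+ j -> 2 ^+ j * dyad m <= 4 * eps ->
  exists2 i, (i < net_size Fs nF m)%N &
    forall z, `|2 ^+ j * nth (fun _ => 0) (min_net Fs nF m) i z - F z| <= 5 * eps.
Proof.
move=> F_cont eps_gt0 j_ge jm_le; have pow_gt0 : 0 < 2 ^+ j :> R by rewrite exprn_gt0.
have [g [g_in g_close] g_lt] := exists_approximant F_cont eps_gt0.
have g_scaled : U (fun z => (2 ^+ j)^-1 * g z).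
  split; first exact: bfs_scale Fs_banach _ _ g_in.
  rewrite (bfs_normZ Fs_banach _ g_in) gtr0_norm ?invr_gt0 // mulrC ler_pdivrMr // mul1r.
  exact/ltW/(lt_le_trans g_lt).
have [size_net _ net_cover] := min_netP m.
have [f f_in f_close] := net_cover _ g_scaled.
exists (index f (min_net Fs nF m)); first by rewrite -size_net index_mem.
move=> z; rewrite nth_index //.
have -> : 2 ^+ j * f z - F z = 2 ^+ j * (f z - (2 ^+ j)^-1 * g z) + (g z - F z).
  by rewrite mulrBr mulrA divff ?mul1r ?gt_eqF //; ring.
apply: le_trans (ler_normD _ _) _; rewrite normrM gtr0_norm // distrC (distrC (g z)).
have := ler_wpM2l (ltW pow_gt0) (f_close z); have := g_close z; lra.
Qed.

End Approximation.

Section Main.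
Variables (R : realType) (X : topologicalType).
Variables (Fs : set (X -> R)) (nF : (X -> R) -> R).
Hypothesis Fs_banach : BanachFunctionSpace Fs nF.
Hypothesis Fs_compact : compactly_embedded Fs nF.
Hypothesis Fs_dense : densely_embedded Fs.

Local Notation predictor :=
  (learner_strategy candidates (awake_at Fs nF) (prior Fs nF) (expert Fs nF)).

Lemma predictor_loss_le F eps (x : nat -> X) (y : nat -> R) N :
  CX F -> 0 < eps <= 1/2 -> (forall s, `|y s| <= 1) ->
  \sum_(n < N) (y n - predictor (history x y n) (x n)) ^+ 2 <=
  \sum_(n < N) (y n - F (x n)) ^+ 2 +
  2000 * (let A := 2 * Num.max 1 (approachability Fs nF eps F) in
          entropy (unit_ball Fs nF) (eps / A) + log2 (log2 (1 / eps)) + log2 (log2 A)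
          + eps * N%:R + 1).
Proof.
move=> F_cont eps_range y_le1 /=; have /andP[eps_gt0 eps_le] := eps_range.
under eq_bigr do rewrite learner_strategy_history.
set ap := approachability Fs nF eps F; set A := 2 * Num.max 1 ap.
have [A_ge2 A_ge_ap] : 2 <= A /\ ap + 1 <= A.
  by have := le_max 1 1 ap; have := le_max ap 1 ap; rewrite lexx orbT /A; lra.
have [j [m [j_gt j_le m_le jm_le]]] := exists_dyadic_scales A_ge2 eps_range.
have [i i_lt close] := exists_expert_close Fs_banach Fs_compact Fs_dense F_cont eps_gt0
  (ltW (le_lt_trans A_ge_ap j_gt)) jm_le.
have expert_loss : \sum_(s < N) (y s - expert Fs nF ((j, m), i) (x s)) ^+ 2 <=
    \sum_(s < N) (y s - F (x s)) ^+ 2 + 4 * (5 * eps) * N%:R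
  := sum_sqrB_clip_le x N y_le1 close.
have regret := learner_loss_le (@prior_ge0 _ _ Fs nF) (@expert_le1 _ _ Fs nF) x y_le1
  candidates_uniq (@candidates_awake _ _ Fs nF) candidates_mono (@awake_at_mono _ _ Fs nF)
  (@prior_sum_le1 _ _ Fs nF) N (awake_at_wake_time j i_lt) (prior_gt0 j i_lt).
have penalty := expert_penalty_le A_ge2 eps_range j_le m_le i_lt.
have n_gt0 : (0 < net_size Fs nF m)%N by apply: leq_ltn_trans i_lt.
have eps_A_le : eps / A <= dyad m.
  by rewrite -[eps / A]invf_div lef_pV2 ?posrE ?divr_gt0 //; lra.
have eps_A_gt0 : 0 < eps / A by rewrite divr_gt0 //; lra.
have entropy_ge := log2_net_size_le_entropy Fs_compact eps_A_gt0 eps_A_le n_gt0.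
have log2_n_ge0 : 0 <= log2 ((net_size Fs nF m)%:R : R) by rewrite log2_ge0 ?ler1n.
have [la_ge0 lb_ge0] : 0 <= log2 (log2 A) /\ 0 <= log2 (log2 (1 / eps)).
  by split; apply/log2_ge0/log2_ge1; rewrite ?ler_pdivlMr //; lra.
have epsN_ge0 : 0 <= eps * N%:R by rewrite mulr_ge0 // ltW.
rewrite /learner_loss in regret; lra.
Qed.

End Main.

Lemma ler_addr_mul_inf (R : realType) (C a b : R) (E : set R) : 0 < C -> E !=set0 ->
  (forall v, E v -> a <= b + C * v) -> a <= b + C * inf E.
Proof.
move=> C_gt0 E_ne le_E; suff : (a - b) / C <= inf E by rewrite ler_pdivrMr //; lra.
by apply: lb_le_inf => // v /le_E le_v; rewrite ler_pdivrMr //; lra.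
Qed.

Theorem theorem4 :
  exists C : Rdefinitions.R, 0 < C /\
  forall (X : topologicalType), inhabited X ->
  forall (Fs : set (X -> Rdefinitions.R)) (nF : (X -> Rdefinitions.R) -> Rdefinitions.R),
    BanachFunctionSpace Fs nF ->
    compactly_embedded Fs nF ->
    densely_embedded Fs ->
    exists S : strategy Rdefinitions.R X,
      (forall h x, `|S h x| <= 1) /\
      forall (N : nat) (F : X -> Rdefinitions.R), CX F ->
      forall (x : nat -> X) (y : nat -> Rdefinitions.R), (forall n, -1 <= y n <= 1) ->
        \sum_(n < N) (y n - S (history x y n) (x n)) ^+ 2
        <= \sum_(n < N) (y n - F (x n)) ^+ 2
           + C * inf [set (let A := 2 * Num.max 1 (approachability Fs nF e F) in
                          entropy (unit_ball Fs nF) (e / A)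
                          + log2 (log2 (1 / e)) + log2 (log2 A)
                          + e * N%:R + 1)
                     | e in `]0, 1/2]].
Proof.
exists 2000; split; first lra.
move=> X _ Fs nF Fs_banach Fs_compact Fs_dense.
exists (learner_strategy candidates (awake_at Fs nF) (prior Fs nF) (expert Fs nF)); split.
  by move=> h z; apply: learner_le1; [exact: prior_ge0 | exact: expert_le1].
move=> N F F_cont x y y_range; have y_le1 s : `|y s| <= 1 by rewrite ler_norml.
apply: ler_addr_mul_inf => [|| _ [e e_in <-]]; first lra.
  by eexists; exists (1 / 2) => //; rewrite /= in_itv /=; apply/andP; split; lra.
by apply: predictor_loss_le => //; move: e_in; rewrite /= in_itv.
Qed.
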